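(* For every $n\geq 2$, the pair $(H_n,v)$ is neutral for the glue operator, where $H_n$ is the hanging split graph of size $n$ and $v$ is its distinguished clique vertex.
   Context: For $n\geq 2$, the hanging split graph $H_n$ consists of a clique on vertices $\{v,v_1,\ldots,v_{n-1}\}$, an independent set $\{u_1,\ldots,u_{n-1}\}$, and edges $u_iv_i$ for $1\le i\le n-1$ (so $H_2$ is the path on three vertices with $v$ an endpoint). The Maker-Breaker domination game on a graph: Dominator and Staller alternately choose a not-yet-chosen vertex (no passing), starting with all vertices unchosen; when all vertices are chosen, Dominator wins if his vertices form a dominating set of the graph, otherwise Staller wins. The outcome $o(\cdot)$ is $\mathcal D$ if Dominator has a winning strategy both as first and as second player, $\mathcal S$ if Staller has a winning strategy both as first and as second player, and $\mathcal N$ if the first player has a winning strategy. For disjoint graphs $G,H$ and vertices $u\in V(G)$, $v\in V(H)$, the glued graph $G\odot_{u,v}H$ is obtained from the disjoint union by identifying $u$ and $v$ into one new vertex $w$, adjacent to all former neighbors of $u$ in $G$ and of $v$ in $H$. The pair $(H,v)$ is neutral for the glue operator if for every graph $G$ and every vertex $u$ of $G$, $o(G\odot_{u,v}H)=o(G)$. *)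

From mathcomp Require Import all_boot.
Set Implicit Arguments. Unset Strict Implicit. Unset Printing Implicit Defensive.

(* A finite simple graph is a finType T with a symmetric irreflexive
   adjacency relation e : rel T. *)

Section Game.
Variables (T : finType) (e : rel T).

Definition dominating (D : {set T}) : bool :=
  [forall x, (x \in D) || [exists y in D, e x y]].

(* Position: D (Dominator's vertices),
   S (Staller's vertices); dom_turn = true iff Dominator moves next.
   The fuel k is the number of unchosen vertices.  No passing; when all
   vertices are chosen Dominator wins iff D is dominating. *)
Fixpoint dom_wins (k : nat) (D S : {set T}) (dom_turn : bool) : bool :=
  if k is k'.+1 then
    if dom_turn then [exists x in ~: (D :|: S), dom_wins k' (x |: D) S false]
    else [forall x in ~: (D :|: S), dom_wins k' D (x |: S) true]
  else dominating D.

Fixpoint stal_wins (k : nat) (D S : {set T}) (dom_turn : bool) : bool :=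
  if k is k'.+1 then
    if dom_turn then [forall x in ~: (D :|: S), stal_wins k' (x |: D) S false]
    else [exists x in ~: (D :|: S), stal_wins k' D (x |: S) true]
  else ~~ dominating D.

Definition D_wins_first : bool := dom_wins #|T| set0 set0 true.
Definition D_wins_second : bool := dom_wins #|T| set0 set0 false.
Definition S_wins_first : bool := stal_wins #|T| set0 set0 false.
Definition S_wins_second : bool := stal_wins #|T| set0 set0 true.

End Game.

Inductive outcome_t := OutD | OutS | OutN.

(* o(G): D if Dominator wins as first and as second player, S if Staller
   wins as first and as second player, N if the first player wins;
   None in any other (a priori possible) case. *)
Definition outcome (T : finType) (e : rel T) : option outcome_t :=
  if D_wins_first e && D_wins_second e then Some OutD
  else if S_wins_first e && S_wins_second e then Some OutS
  else if D_wins_first e && S_wins_first e then Some OutN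
  else None.

(* Glued graph G ⊙_{u,v} H: vertex set V(G) ⊎ (V(H) \ {v}); the vertex
   inl u plays the role of the identified vertex w. *)
Definition glue_vtx (T1 T2 : finType) (v : T2) : finType :=
  (T1 + {x : T2 | x != v})%type.
Arguments glue_vtx T1 {T2} v.

Definition glue_rel (T1 T2 : finType) (e1 : rel T1) (u : T1) (e2 : rel T2) (v : T2)
  : rel (glue_vtx T1 v) :=
  fun a b =>
    match a, b with
    | inl x, inl y => e1 x y
    | inr x, inr y => e2 (val x) (val y)
    | inl x, inr y => (x == u) && e2 v (val y)
    | inr x, inl y => (y == u) && e2 (val x) v
    end.

Arguments glue_rel {T1 T2} e1 u e2 v.

(* Hanging split graph H_n: vertices None = v, Some (inl i) = v_(i+1),
   Some (inr i) = u_(i+1), for i < n-1. *)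
Definition H_vtx (n : nat) : finType := option ('I_(n.-1) + 'I_(n.-1)).

Definition H_rel (n : nat) : rel (H_vtx n) :=
  fun a b =>
    match a, b with
    | None, Some (inl _) => true
    | Some (inl _), None => true
    | Some (inl i), Some (inl j) => i != j
    | Some (inl i), Some (inr j) => i == j
    | Some (inr i), Some (inl j) => i == j
    | _, _ => false
    end.

Definition H_v (n : nat) : H_vtx n := None.

Definition neutral (T2 : finType) (e2 : rel T2) (v : T2) : Prop :=
  forall (T : finType) (e : rel T), symmetric e -> irreflexive e ->
    forall u : T, outcome (glue_rel e u e2 v) = outcome e.

From mathcomp Require Import all_boot zify.
Set Implicit Arguments. Unset Strict Implicit. Unset Printing Implicit Defensive.

(* The glued graph is G together with pairs (v_i, u_i): every v_i is adjacent to the glued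
   vertex u, and u_i is a leaf at v_i.  If Dominator wins on G, he wins on the glued graph by
   following his strategy on G and answering every move in a pair with the other vertex of
   that pair.  Conversely, Staller can claim the v_i one at a time, each time forcing Dominator
   to answer u_i, after which the game is the game on G.  If Dominator starts inside a pair,
   either he takes u_i and Staller answers v_i, killing the pair, or he takes v_i, which
   dominates u; then he wins the game on G in which u is exempt, and on G itself he wins by
   opening with u.  So Dominator wins on both graphs for the same starting players, and the
   outcomes agree. *)

Lemma setC_eq0 (T : finType) (A : {set T}) : (~: A == set0) = (A == setT).
Proof. by apply/eqP/eqP => [CA | ->]; [rewrite -[A]setCK CA setC0 | exact: setCT]. Qed.

Lemma card_setC_setU1 (T : finType) (x : T) (A : {set T}) :
  x \notin A -> #|~: A| = #|~: (x |: A)|.+1.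
Proof. by move=> xA; rewrite (cardsD1 x) inE xA setCU setIC -setDE. Qed.

Section MakerBreaker.
Variable T : finType.
Implicit Types (D S X Y : {set T}) (win : {set T} -> bool) (t : bool).

Definition free D S := ~: (D :|: S).

Fixpoint mb_play win k D S t : bool :=
  if k is k'.+1 then
    if t then [exists x in free D S, mb_play win k' (x |: D) S false]
    else [forall x in free D S, mb_play win k' D (x |: S) true]
  else win D.

(* Dominator, to move iff [t], can force a final position in which his set satisfies [win]. *)
Definition mb_win win D S t := mb_play win #|free D S| D S t.

Definition upward_closed win := forall X Y, X \subset Y -> win X -> win Y.

Lemma in_free x D S : (x \in free D S) = (x \notin D) && (x \notin S).
Proof. by rewrite !inE negb_or. Qed.

Lemma notin_free x D S : (x \notin free D S) = (x \in D) || (x \in S).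
Proof. by rewrite in_free negb_and !negbK. Qed.

Lemma in_setU_free x D S : (x \in D :|: free D S) = (x \in D) || (x \notin S).
Proof. by rewrite in_setU in_free; case: (x \in D). Qed.

Lemma free_setU1D y D S : free (y |: D) S = free D S :\ y.
Proof. by apply/setP => x; rewrite !inE; case: (x == y). Qed.

Lemma free_setU1S y D S : free D (y |: S) = free D S :\ y.
Proof. by apply/setP => x; rewrite !inE; case: (x == y); rewrite ?orbT ?orbF. Qed.

Lemma free_subset D S D' S' : D \subset D' -> S \subset S' -> free D' S' \subset free D S.
Proof. by move=> sD sS; rewrite setCS setUSS. Qed.

Lemma card_free_setU1D y D S : y \in free D S -> #|free D S| = #|free (y |: D) S|.+1.
Proof. by move=> Hy; rewrite free_setU1D (cardsD1 y) Hy. Qed.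

Lemma card_free_setU1S y D S : y \in free D S -> #|free D S| = #|free D (y |: S)|.+1.
Proof. by move=> Hy; rewrite free_setU1S (cardsD1 y) Hy. Qed.

Lemma card_free_setU1DS y z D S : y \in free D S -> z \in free D S -> y != z ->
  #|free D S| = #|free (y |: D) (z |: S)|.+2.
Proof.
move=> Hy Hz yz; rewrite (card_free_setU1D Hy) (card_free_setU1S (y := z)) //.
by rewrite free_setU1D in_setD1 eq_sym yz.
Qed.

Lemma mb_win_end win D S t : free D S = set0 -> mb_win win D S t = win D.
Proof. by rewrite /mb_win => ->; rewrite cards0. Qed.

Lemma mb_win_domE win D S : free D S != set0 ->
  mb_win win D S true = [exists y in free D S, mb_win win (y |: D) S false].
Proof.
rewrite -card_gt0 /mb_win; case Ek: #|free D S| => [//|k] _ /=.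
apply: eq_existsb => y; case Hy: (y \in free D S) => //=.
by move: Ek; rewrite (card_free_setU1D Hy) => -[->].
Qed.

Lemma mb_win_stalE win D S : free D S != set0 ->
  mb_win win D S false = [forall y in free D S, mb_win win D (y |: S) true].
Proof.
rewrite -card_gt0 /mb_win; case Ek: #|free D S| => [//|k] _ /=.
apply: eq_forallb => y; case Hy: (y \in free D S) => //=.
by move: Ek; rewrite (card_free_setU1S Hy) => -[->].
Qed.

Lemma mb_win_dom_move win D S y :
  y \in free D S -> mb_win win (y |: D) S false -> mb_win win D S true.
Proof.
move=> Hy Hwin; rewrite mb_win_domE; last by apply/set0Pn; exists y.
by apply/existsP; exists y; rewrite Hy.
Qed.

Lemma mb_win_domP win D S : free D S != set0 -> mb_win win D S true ->
  exists2 y, y \in free D S & mb_win win (y |: D) S false.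
Proof. by move=> HS; rewrite mb_win_domE // => /exists_inP. Qed.

Lemma mb_win_stal_move win D S y :
  y \in free D S -> mb_win win D S false -> mb_win win D (y |: S) true.
Proof.
move=> Hy; rewrite mb_win_stalE; last by apply/set0Pn; exists y.
by move=> /forall_inP; apply.
Qed.

Lemma mb_win_stalP win D S : free D S != set0 ->
  (forall y, y \in free D S -> mb_win win D (y |: S) true) -> mb_win win D S false.
Proof. by move=> HS Hwin; rewrite mb_win_stalE //; apply/forall_inP. Qed.

Lemma mb_win_reply win D S y z : y \in free D S -> z \in free D S -> y != z ->
  mb_win win (y |: D) (z |: S) false -> mb_win win D (z |: S) true.
Proof. by move=> Hy Hz yz; apply: mb_win_dom_move; rewrite free_setU1S in_setD1 yz. Qed.

Lemma eq_mb_win win1 win2 D S t : win1 =1 win2 -> mb_win win1 D S t = mb_win win2 D S t.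
Proof.
move=> Ew; rewrite /mb_win; move: #|free D S| => k; elim: k D S t => [|k IH] D S [] /=;
  by [apply: eq_existsb => y; rewrite IH | apply: eq_forallb => y; rewrite IH|].
Qed.

Lemma mb_win_cover win D S t :
  upward_closed win -> mb_win win D S t -> win (D :|: free D S).
Proof.
move=> up; have [k] := ubnP #|free D S|; elim: k D S t => // k IH D S t Hk Hwin.
have [HS|HS] := eqVneq (free D S) set0; first by rewrite HS setU0 -(mb_win_end win t HS).
case: t Hwin => [/(mb_win_domP HS) [y Hy Hwin] | Hwin].
  have Hk' : #|free (y |: D) S| < k by move: Hk; rewrite (card_free_setU1D Hy).
  by move: (IH _ _ _ Hk' Hwin); rewrite free_setU1D -setUA setUCA setD1K.
case/set0Pn: HS => y Hy.
have Hk' : #|free D (y |: S)| < k by move: Hk; rewrite (card_free_setU1S Hy).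
apply: up (IH _ _ _ Hk' (mb_win_stal_move Hy Hwin)).
by rewrite setUS // free_subset // subsetU1.
Qed.

Section Monotonicity.
Variables (win1 win2 : {set T} -> bool) (K : {set T}).
Hypothesis up1 : upward_closed win1.
Hypothesis win12 : forall X Y, X \subset Y -> K \subset Y -> win1 X -> win2 Y.

Lemma mb_win_mono_end D S D' S' t t' : free D' S' = set0 ->
  K \subset D' -> D \subset D' -> S' \subset S -> mb_win win1 D S t -> mb_win win2 D' S' t'.
Proof.
move=> HS' sK sD sS Hwin; rewrite mb_win_end //; apply: win12 sK (mb_win_cover up1 Hwin).
rewrite subUset sD; apply/subsetP => x; rewrite in_free => /andP [_ xS].
have : x \notin free D' S' by rewrite HS' inE.
by rewrite notin_free => /orP [// | /(subsetP sS)]; rewrite (negbTE xS).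
Qed.

Lemma mb_win_mono D S D' S' t : K \subset D' -> D \subset D' -> S' \subset S ->
  mb_win win1 D S t -> mb_win win2 D' S' t.
Proof.
have [k] := ubnP #|free D' S'|.
elim: k D S D' S' t => // k IH D S D' S' t Hk sK sD sS Hwin.
have [HS'|HS'] := eqVneq (free D' S') set0; first exact: mb_win_mono_end Hwin.
have sDz z : D \subset z |: D' by apply: subset_trans sD (subsetU1 _ _).
have sKz z : K \subset z |: D' by apply: subset_trans sK (subsetU1 _ _).
case: t Hwin => Hwin.
  suff: exists2 z, z \in free D' S' &
      exists2 D1 : {set T}, D1 \subset z |: D' & mb_win win1 D1 S false.
    move=> [z Hz [D1 sD1 Hwin1]]; apply: (mb_win_dom_move Hz).
    by apply: IH sD1 sS Hwin1 => //; move: Hk; rewrite (card_free_setU1D Hz).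
  case/set0Pn: (HS') => z0 Hz0.
  have [HS|HS] := eqVneq (free D S) set0.
    by exists z0 => //; exists D; rewrite // mb_win_end // -(mb_win_end win1 true HS).
  case: (mb_win_domP HS Hwin) => y Hy Hwin1.
  have [Hy'|Hy'] := boolP (y \in free D' S').
    by exists y => //; exists (y |: D); rewrite // setUS.
  exists z0 => //; exists (y |: D) => //; rewrite subUset sDz andbT sub1set !inE.
  move: Hy Hy'; rewrite in_free notin_free => /andP [_ yS] /orP [-> | /(subsetP sS)].
    by rewrite orbT.
  by rewrite (negbTE yS).
apply: mb_win_stalP => // y Hy.
have [HyS|HyS] := boolP (y \in free D S).
  apply: IH (mb_win_stal_move HyS Hwin) => //; last by rewrite setUS.
  by move: Hk; rewrite (card_free_setU1S Hy).
have sS1 : y |: S' \subset S.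
  rewrite subUset sS andbT sub1set; move: HyS Hy; rewrite notin_free in_free.
  by case/orP => [/(subsetP sD) -> | //].
have [HS1|HS1] := eqVneq (free D' (y |: S')) set0; first exact: mb_win_mono_end Hwin.
case/set0Pn: HS1 => z Hz; apply: (mb_win_dom_move Hz).
apply: IH sS1 Hwin => //.
by move: Hk; rewrite (card_free_setU1S Hy) (card_free_setU1D Hz); lia.
Qed.

End Monotonicity.

Lemma mb_win_sub win D S D' S' t : upward_closed win ->
  D \subset D' -> S' \subset S -> mb_win win D S t -> mb_win win D' S' t.
Proof.
move=> up; apply: (mb_win_mono up) (sub0set _).
by move=> X Y sXY _; apply: up.
Qed.

End MakerBreaker.

Section Domination.
Variables (T : finType) (e : rel T).
Implicit Types (A D S X : {set T}) (t : bool).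

Definition dominated_by A X := [forall x in A, (x \in X) || [exists y in X, e x y]].

Lemma dominated_byT : dominated_by setT =1 dominating e.
Proof. by move=> X; apply: eq_forallb => x; rewrite in_setT. Qed.

Lemma dominated_by_closed A : upward_closed (dominated_by A).
Proof.
move=> X Y /subsetP sXY /forall_inP dX; apply/forall_inP => x /dX /orP [/sXY -> // |].
by case/exists_inP => y /sXY yY xy; apply/orP; right; apply/exists_inP; exists y.
Qed.

Lemma dominating_closed : upward_closed (dominating e).
Proof. by move=> X Y sXY; rewrite -!dominated_byT; apply: dominated_by_closed. Qed.

Lemma dom_wins_mb_play k D S t : dom_wins e k D S t = mb_play (dominating e) k D S t.
Proof.
elim: k D S t => [|k IH] D S [] //=;
  by [apply: eq_existsb => x; rewrite IH | apply: eq_forallb => x; rewrite IH].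
Qed.

Lemma stal_wins_neg k D S t : stal_wins e k D S t = ~~ dom_wins e k D S t.
Proof.
elim: k D S t => [|k IH] D S [] //=;
  by [rewrite negb_exists; apply: eq_forallb => x; rewrite IH; case: (x \in _)
     | rewrite negb_forall; apply: eq_existsb => x; rewrite IH; case: (x \in _)].
Qed.

Lemma dom_wins_mb_win t : dom_wins e #|T| set0 set0 t = mb_win (dominating e) set0 set0 t.
Proof. by rewrite dom_wins_mb_play /mb_win /free setU0 setC0 cardsT. Qed.

(* A free vertex all of whose neighbours belong to Staller alone must be
   claimed by Dominator at once: otherwise Staller claims it and it stays undominated. *)
Lemma mb_win_forced x D S : x \in free D S -> (forall y, e x y -> (y \in S) && (y \notin D)) ->
  mb_win (dominating e) D S true -> mb_win (dominating e) (x |: D) S false.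
Proof.
move=> Hx Nx Hwin; have HS : free D S != set0 by apply/set0Pn; exists x.
have [y Hy Hwin'] := mb_win_domP HS Hwin; have [<- // | yx] := eqVneq y x.
have Hx' : x \in free (y |: D) S by rewrite free_setU1D in_setD1 eq_sym yx Hx.
have /forallP/(_ x) := mb_win_cover dominating_closed (mb_win_stal_move Hx' Hwin').
move: Hx Hy; rewrite !in_free => /andP [xD _] /andP [_ yS].
rewrite in_setU_free !inE eqxx eq_sym (negbTE yx) (negbTE xD) /=.
case/exists_inP => z; rewrite in_setU_free !inE => + /Nx /andP [zS zD].
rewrite (negbTE zD) zS orbT /= !orbF => /eqP zy.
by move: yS; rewrite -zy zS.
Qed.

Lemma mb_win_claim_exempt x D S : x \in free D S ->
  mb_win (dominated_by [set~ x]) D S false -> mb_win (dominating e) D S true.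
Proof.
move=> Hx Hwin; apply: (mb_win_dom_move Hx).
have exempt X (Y : {set T}) : X \subset Y -> [set x] \subset Y -> dominated_by [set~ x] X -> dominating e Y.
  rewrite sub1set => sXY xY /(dominated_by_closed sXY) /forall_inP dY.
  apply/forallP => z; have [-> | zx] := eqVneq z x; first by rewrite xY.
  by apply: dY; rewrite !inE zx.
apply: (mb_win_mono (@dominated_by_closed [set~ x]) exempt _ _ _ Hwin) => //.
  by rewrite sub1set setU11.
exact: subsetU1.
Qed.

End Domination.

Arguments dominating_closed {T e}.

Section Glue.
Variables (T : finType) (e : rel T) (u : T) (n : nat).
Local Notation m := n.-1.
Local Notation G := (glue_vtx T (H_v n)).
Local Notation ge := (glue_rel e u (@H_rel n) (H_v n)).
Implicit Types (x : T) (i j : 'I_m) (D S X : {set T}) (A B Q R : {set 'I_m}).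

Definition hv i : G := inr (exist _ (Some (inl i)) isT).
Definition hu i : G := inr (exist _ (Some (inr i)) isT).

Variant glue_vtx_spec : G -> Type :=
  | GlueInl x : glue_vtx_spec (inl x)
  | GlueHv i : glue_vtx_spec (hv i)
  | GlueHu i : glue_vtx_spec (hu i).

Lemma glue_vtxP z : glue_vtx_spec z.
Proof.
case: z => [x | [[[i|i]|] p]]; first exact: GlueInl; last by [].
  by rewrite (bool_irrelevance p isT); exact: GlueHv.
by rewrite (bool_irrelevance p isT); exact: GlueHu.
Qed.

Lemma hv_inj : injective hv. Proof. by move=> i j [->]. Qed.
Lemma hu_inj : injective hu. Proof. by move=> i j [->]. Qed.

Definition gset X A B : {set G} := inl @: X :|: hv @: A :|: hu @: B.

Lemma in_gset_l x X A B : (inl x \in gset X A B) = (x \in X).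
Proof.
rewrite !inE (mem_imset _ _ inl_inj).
by case: imsetP => [[? _ //]|_]; case: imsetP => [[? _ //]|_]; rewrite !orbF.
Qed.

Lemma in_gset_v i X A B : (hv i \in gset X A B) = (i \in A).
Proof.
rewrite !inE (mem_imset _ _ hv_inj).
by case: imsetP => [[? _ //]|_]; case: imsetP => [[? _ //]|_]; rewrite ?orbF.
Qed.

Lemma in_gset_u i X A B : (hu i \in gset X A B) = (i \in B).
Proof.
rewrite !inE (mem_imset _ _ hu_inj).
by case: imsetP => [[? _ //]|_]; case: imsetP => [[? _ //]|_].
Qed.

Definition in_gset := (in_gset_l, in_gset_v, in_gset_u).

Lemma gset_setU1l x X A B : gset (x |: X) A B = inl x |: gset X A B.
Proof. by rewrite /gset imsetU1 -!setUA. Qed.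

Lemma gset_setU1v i X A B : gset X (i |: A) B = hv i |: gset X A B.
Proof. by rewrite /gset imsetU1 setUCA -setUA. Qed.

Lemma gset_setU1u i X A B : gset X A (i |: B) = hu i |: gset X A B.
Proof. by rewrite /gset imsetU1 setUCA. Qed.

Lemma gset0 : gset set0 set0 set0 = set0.
Proof. by rewrite /gset !imset0 !setU0. Qed.

Lemma gset_subset X A B X' A' B' :
  X \subset X' -> A \subset A' -> B \subset B' -> gset X A B \subset gset X' A' B'.
Proof. by move=> sX sA sB; rewrite !setUSS ?imsetS. Qed.

Lemma free_gset D A B S A' B' :
  free (gset D A B) (gset S A' B') = gset (free D S) (~: (A :|: A')) (~: (B :|: B')).
Proof. by apply/setP => z; case/glue_vtxP: z => [x|i|i]; rewrite in_free !in_gset !inE negb_or. Qed.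

Lemma gset_eq0 X A B : (gset X A B == set0) = [&& X == set0, A == set0 & B == set0].
Proof. by rewrite !setU_eq0 !imset_eq0 andbA. Qed.

Lemma ge_inl_hv x i : ge (inl x) (hv i) = (x == u). Proof. by rewrite /= andbT. Qed.
Lemma ge_inl_hu x i : ge (inl x) (hu i) = false. Proof. by rewrite /= andbF. Qed.
Lemma ge_hv_hu i j : ge (hv i) (hu j) = (i == j). Proof. by []. Qed.
Lemma ge_hu_hv i j : ge (hu i) (hv j) = (i == j). Proof. by []. Qed.

Lemma ge_huE i z : ge (hu i) z = (z == hv i).
Proof.
case/glue_vtxP: z => [x|j|j] //=; first by rewrite andbF.
by rewrite (inj_eq hv_inj) eq_sym.
Qed.

Lemma dominating_gset D P1 P2 :
  P1 :|: P2 = setT -> dominating e D -> dominating ge (gset D P1 P2).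
Proof.
move=> HP /forallP dD; apply/forallP => z.
case/glue_vtxP: z => [x|i|i]; rewrite in_gset.
- case/orP: (dD x) => [-> // | /exists_inP [y yD xy]].
  by apply/orP; right; apply/exists_inP; exists (inl y); rewrite ?in_gset.
- have : i \in P1 :|: P2 by rewrite HP inE.
  case/setUP => [-> // | iP2]; apply/orP; right.
  by apply/exists_inP; exists (hu i); rewrite ?in_gset ?ge_hv_hu.
- have : i \in P1 :|: P2 by rewrite HP inE.
  case/setUP => [iP1 | -> //]; apply/orP; right.
  by apply/exists_inP; exists (hv i); rewrite ?in_gset ?ge_hu_hv.
Qed.

Lemma free_pair_hv_hu D S P1 P2 i :
  (hv i \in free (gset D P1 P2) (gset S P2 P1)) = (hu i \in free (gset D P1 P2) (gset S P2 P1)).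
Proof. by rewrite free_gset !in_gset setUC. Qed.

(* Dominator holds v_i and Staller u_i for i in P1, and the reverse for i in P2; Dominator
   answers every move in a pair by the other vertex of the pair. *)
Lemma pairing_strategy D S P1 P2 t : mb_win (dominating e) D S t ->
  mb_win (dominating ge) (gset D P1 P2) (gset S P2 P1) t.
Proof.
have [k] := ubnP #|free (gset D P1 P2) (gset S P2 P1)|.
elim: k D S P1 P2 t => // k IH D S P1 P2 t Hk Hwin.
have [HG|HG] := eqVneq (free (gset D P1 P2) (gset S P2 P1)) set0.
  move/eqP: (HG); rewrite free_gset gset_eq0 setC_eq0 => /and3P [/eqP HS /eqP HP _].
  rewrite (mb_win_end _ _ HG); rewrite (mb_win_end _ _ HS) in Hwin.
  exact: dominating_gset Hwin.
have freeE := free_gset D P1 P2 S P2 P1.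
case: t Hwin => Hwin.
  have [HS|HS] := eqVneq (free D S) set0.
    move: (HG); rewrite freeE gset_eq0 HS eqxx [P2 :|: P1]setUC andbb => /set0Pn [i iP].
    have Hv : hv i \in free (gset D P1 P2) (gset S P2 P1) by rewrite freeE in_gset.
    have Hu : hu i \in free (gset D P1 P2) (gset S P2 P1) by rewrite -free_pair_hv_hu.
    apply: (mb_win_dom_move Hv); rewrite -gset_setU1v.
    have sS : gset S P2 P1 \subset gset S P2 (i |: P1) by rewrite gset_subset ?subsetU1.
    apply: (mb_win_sub dominating_closed (subxx _) sS).
    apply: IH; last by rewrite !mb_win_end in Hwin *.
    by move: Hk; rewrite (card_free_setU1DS Hv Hu) // gset_setU1v gset_setU1u; lia.
  have [x Hx Hwin'] := mb_win_domP HS Hwin.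
  have Hx' : inl x \in free (gset D P1 P2) (gset S P2 P1) by rewrite freeE in_gset.
  apply: (mb_win_dom_move Hx'); rewrite -gset_setU1l; apply: IH Hwin'.
  by move: Hk; rewrite (card_free_setU1D Hx') gset_setU1l.
apply: mb_win_stalP => // z; case/glue_vtxP: z => [x|i|i] Hz.
- rewrite -gset_setU1l; apply: IH (mb_win_stal_move _ Hwin); last by rewrite freeE in_gset in Hz.
  by move: Hk; rewrite (card_free_setU1S Hz) gset_setU1l.
- have Hu := Hz; rewrite free_pair_hv_hu in Hu; apply: (mb_win_reply Hu Hz) => //.
  rewrite -gset_setU1u -gset_setU1v; apply: IH Hwin.
  by move: Hk; rewrite (card_free_setU1DS Hu Hz) // gset_setU1v gset_setU1u; lia.
- have Hv := Hz; rewrite -free_pair_hv_hu in Hv; apply: (mb_win_reply Hv Hz) => //.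
  rewrite -gset_setU1u -gset_setU1v; apply: IH Hwin.
  by move: Hk; rewrite (card_free_setU1DS Hv Hz) // gset_setU1v gset_setU1u; lia.
Qed.

Lemma dominated_by_resolved D R (A : {set T}) : (R != set0 -> u \notin A) ->
  dominating ge (gset D R setT) -> dominated_by e A D.
Proof.
move=> uA /forallP dG; apply/forall_inP => x xA.
case/orP: (dG (inl x)) => [|/exists_inP [z]]; first by rewrite in_gset => ->.
case/glue_vtxP: z => [y|i|i]; rewrite in_gset.
- by move=> yD xy; apply/orP; right; apply/exists_inP; exists y.
- move=> iR; rewrite ge_inl_hv => /eqP xu.
  have /uA : R != set0 by apply/set0Pn; exists i.
  by rewrite -xu xA.
- by rewrite ge_inl_hu.
Qed.

Lemma free_resolved D S Q R : Q :|: R = setT ->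
  free (gset D R setT) (gset S Q set0) = gset (free D S) set0 set0.
Proof. by move=> QR; rewrite free_gset [R :|: Q]setUC QR setU0 setCT. Qed.

(* Once every pair is claimed, with Dominator holding all u_i, the glued game is the
   game on G in which u needs no domination as soon as Dominator holds some v_i. *)
Lemma glue_resolved D S Q R (A : {set T}) t : Q :|: R = setT -> (R != set0 -> u \notin A) ->
  mb_win (dominating ge) (gset D R setT) (gset S Q set0) t -> mb_win (dominated_by e A) D S t.
Proof.
move=> QR uA; have [k] := ubnP #|free D S|; elim: k D S t => // k IH D S t Hk Hwin.
have freeE := free_resolved D S QR.
have [HS|HS] := eqVneq (free D S) set0.
  have HG : free (gset D R setT) (gset S Q set0) = set0 by rewrite freeE HS gset0.
  by rewrite mb_win_end //; apply: dominated_by_resolved uA _; rewrite -(mb_win_end _ t HG).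
case: t Hwin => Hwin.
  have HG : free (gset D R setT) (gset S Q set0) != set0 by rewrite freeE gset_eq0 (negbTE HS).
  have [z] := mb_win_domP HG Hwin; rewrite freeE.
  case/glue_vtxP: z => [x|i|i]; rewrite in_gset ?in_set0 // => Hx.
  rewrite -gset_setU1l => Hwin'; apply: (mb_win_dom_move Hx); apply: IH Hwin'.
  by move: Hk; rewrite (card_free_setU1D Hx).
apply: mb_win_stalP => // x Hx.
have Hx' : inl x \in free (gset D R setT) (gset S Q set0) by rewrite freeE in_gset.
have := mb_win_stal_move Hx' Hwin; rewrite -gset_setU1l => Hwin'; apply: IH Hwin'.
by move: Hk; rewrite (card_free_setU1S Hx).
Qed.

(* Dominator holds v_i for i in R and u_i for i in Q :|: R, Staller holds v_i for i in Q.
   Staller claims the remaining v_i one by one, each time forcing Dominator onto u_i. *)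
Lemma stal_claims_clique D S Q R (A : {set T}) : (R != set0 -> u \notin A) ->
  mb_win (dominating ge) (gset D R (Q :|: R)) (gset S Q set0) false ->
  mb_win (dominated_by e A) D S false.
Proof.
move=> uA; have [k] := ubnP #|~: (Q :|: R)|; elim: k Q => // k IH Q Hk Hwin.
have [/eqP | /set0Pn [i]] := eqVneq (~: (Q :|: R)) set0.
  by rewrite setC_eq0 => /eqP QR; apply: (glue_resolved QR uA); rewrite -QR.
rewrite inE => iQR; move: (iQR); rewrite inE negb_or => /andP [iQ iR].
have Hv : hv i \in free (gset D R (Q :|: R)) (gset S Q set0).
  by rewrite free_gset in_gset !inE negb_or iR iQ.
have Hu : hu i \in free (gset D R (Q :|: R)) (hv i |: gset S Q set0).
  by rewrite -gset_setU1v free_gset in_gset !inE !negb_or iQ iR.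
have Nu (z : G) : ge (hu i) z -> (z \in hv i |: gset S Q set0) && (z \notin gset D R (Q :|: R)).
  by rewrite ge_huE => /eqP ->; rewrite setU11 in_gset iR.
have := mb_win_forced Hu Nu (mb_win_stal_move Hv Hwin).
rewrite -gset_setU1v -gset_setU1u setUA => Hwin'; apply: IH Hwin'.
by move: Hk; rewrite (card_setC_setU1 iQR) setUA.
Qed.

(* Opening with v_i dominates u, so Dominator may as well open with u on G. *)
Lemma glue_dom_first Q :
  mb_win (dominating ge) (gset set0 set0 Q) (gset set0 Q set0) true ->
  mb_win (dominating e) set0 set0 true.
Proof.
have [k] := ubnP #|~: Q|; elim: k Q => // k IH Q Hk Hwin.
have Hu : u \in free set0 set0 by rewrite in_free !inE.
have HG : free (gset set0 set0 Q) (gset set0 Q set0) != set0.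
  by apply/set0Pn; exists (inl u); rewrite free_gset in_gset.
have [z] := mb_win_domP HG Hwin; rewrite free_gset.
case/glue_vtxP: z => [x|i|i]; rewrite in_gset => Hz.
- rewrite -gset_setU1l => Hwin'; apply: (mb_win_dom_move Hz).
  rewrite -(eq_mb_win _ _ _ (dominated_byT e)).
  apply: (stal_claims_clique (Q := Q) (R := set0)); first by rewrite eqxx.
  by rewrite [Q :|: _]setU0.
- rewrite -gset_setU1v setU0 => Hwin'; apply: (mb_win_claim_exempt Hu).
  apply: (stal_claims_clique (Q := Q) (R := [set i])); first by rewrite !inE eqxx.
  apply: mb_win_sub dominating_closed _ (subxx _) Hwin'.
  by rewrite gset_subset // subsetUl.
- rewrite setU0 !inE in Hz; rewrite -gset_setU1u => Hwin'.
  have Hv : hv i \in free (gset set0 set0 (i |: Q)) (gset set0 Q set0).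
    by rewrite free_gset in_gset !inE.
  have := mb_win_stal_move Hv Hwin'; rewrite -gset_setU1v => /IH; apply.
  by move: Hk; rewrite (card_setC_setU1 Hz).
Qed.

Lemma mb_win_glue t :
  mb_win (dominating ge) set0 set0 t = mb_win (dominating e) set0 set0 t.
Proof.
apply/idP/idP => [|Hwin]; last by rewrite -gset0; apply: pairing_strategy.
rewrite -gset0; case: t => Hwin; first exact: glue_dom_first Hwin.
rewrite -(eq_mb_win _ _ _ (dominated_byT e)).
by apply: (stal_claims_clique (Q := set0) (R := set0)); rewrite ?eqxx // setU0.
Qed.

End Glue.

Theorem proposition5 (n : nat) : 2 <= n -> neutral (@H_rel n) (H_v n).
Proof.
move=> _ T e _ _ u.
rewrite /outcome /D_wins_first /D_wins_second /S_wins_first /S_wins_second.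
by rewrite !stal_wins_neg !dom_wins_mb_win !mb_win_glue.
Qed.
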